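(* Let $B$ be a skew left brace, $S$ a subbrace and $I$ an ideal of $B$ such that $I$ is an abelian brace and $B=SI=S+I$. Then (1) $I\cap S$ is an ideal of $B$; and (2) $S$ is a maximal subbrace of $B$ if and only if $I/(I\cap S)$ is a chief factor of $B$.
   Context: A skew left brace (brace) is a set $B$ with two group structures $(B,+)$ and $(B,\cdot)$ with $a(b+c)=ab-a+ac$; $\lambda_a(b)=-a+ab$. A subbrace is a subset that is a subgroup of both groups; a maximal subbrace is a proper subbrace not contained in any other proper subbrace. An ideal is a subset that is a normal subgroup of both groups and $\lambda_b$-invariant for all $b$. A brace $I$ is abelian if $xy=x+y=y+x$ for all $x,y\in I$. For ideals $J\subseteq I$ of $B$, $I/J$ is a chief factor of $B$ if $I/J$ is a minimal nonzero ideal of $B/J$ (i.e. $J\ne I$ and no ideal $L$ of $B$ satisfies $J\subsetneq L\subsetneq I$). *)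

Set Implicit Arguments.

Record skew_brace := SkewBrace {
  carrier :> Type;
  badd : carrier -> carrier -> carrier;
  bopp : carrier -> carrier;
  bzero : carrier;
  bmul : carrier -> carrier -> carrier;
  binv : carrier -> carrier;
  bone : carrier;
  badd_assoc : forall a b c, badd a (badd b c) = badd (badd a b) c;
  badd_0l : forall a, badd bzero a = a;
  badd_0r : forall a, badd a bzero = a;
  badd_Nl : forall a, badd (bopp a) a = bzero;
  badd_Nr : forall a, badd a (bopp a) = bzero;
  bmul_assoc : forall a b c, bmul a (bmul b c) = bmul (bmul a b) c;
  bmul_1l : forall a, bmul bone a = a;
  bmul_1r : forall a, bmul a bone = a;
  bmul_Vl : forall a, bmul (binv a) a = bone;
  bmul_Vr : forall a, bmul a (binv a) = bone;
  bcompat : forall a b c,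
    bmul a (badd b c) = badd (bmul a b) (badd (bopp a) (bmul a c))
}.

Arguments badd {s}. Arguments bopp {s}. Arguments bzero {s}.
Arguments bmul {s}. Arguments binv {s}. Arguments bone {s}.

Section Defs.
Context {B : skew_brace}.

Definition lambda (a b : B) : B := badd (bopp a) (bmul a b).

Definition bsubset (X Y : B -> Prop) : Prop := forall x, X x -> Y x.
Definition bsetI (X Y : B -> Prop) : B -> Prop := fun x => X x /\ Y x.
Definition bsetT : B -> Prop := fun _ => True.

Definition add_subgroup (X : B -> Prop) : Prop :=
  X bzero /\ (forall x y, X x -> X y -> X (badd x y)) /\ (forall x, X x -> X (bopp x)).
Definition mul_subgroup (X : B -> Prop) : Prop :=
  X bone /\ (forall x y, X x -> X y -> X (bmul x y)) /\ (forall x, X x -> X (binv x)).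

Definition is_subbrace (S : B -> Prop) : Prop := add_subgroup S /\ mul_subgroup S.

Definition is_ideal (I : B -> Prop) : Prop :=
  add_subgroup I /\ mul_subgroup I /\
  (forall x b, I x -> I (badd (badd b x) (bopp b))) /\
  (forall x b, I x -> I (bmul (bmul b x) (binv b))) /\
  (forall x b, I x -> I (lambda b x)).

Definition is_maximal_subbrace (S : B -> Prop) : Prop :=
  is_subbrace S /\ ~ bsubset bsetT S /\
  (forall T, is_subbrace T -> bsubset S T -> ~ bsubset bsetT T -> bsubset T S).

Definition abelian_sub (I : B -> Prop) : Prop :=
  forall x y, I x -> I y -> bmul x y = badd x y /\ badd x y = badd y x.

Definition chief_factor (I J : B -> Prop) : Prop :=
  is_ideal I /\ is_ideal J /\ bsubset J I /\ ~ bsubset I J /\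
  (forall L, is_ideal L -> bsubset J L -> bsubset L I -> bsubset L J \/ bsubset I L).

End Defs.

(* Conjugating (additively or multiplicatively) an element
       x of J by b = s + i (resp. b = s i) only sees s, since i commutes with x
       inside the abelian brace I; and λ_(s i)(x) = λ_s(x) because λ_i is the
       identity on I.  All three results lie in S.
   (2) For an ideal L of B, S + L is again a subbrace (S + L = S L since
       s + l = s λ_(s⁻¹)(l)).  Dedekind's modular law shows that S + L = B with
       L ⊆ I forces I ⊆ L, and that a subbrace T ⊇ S satisfies T ⊆ S + (I ∩ T).
       Hence, for S maximal, the ideals L between J and I are J or I (according
       as S + L is proper or B); conversely, if I/J is a chief factor, a subbrace
       T ⊇ S gives the ideal I ∩ T (by (1) applied to T) between J and I, so T
       is S or B. *)
From Stdlib Require Import Classical.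

Section BraceArithmetic.
Variable B : skew_brace.
Implicit Types a b x y : B.

Lemma addK a b : badd (bopp a) (badd a b) = b.
Proof. rewrite badd_assoc, badd_Nl, badd_0l; reflexivity. Qed.

Lemma addKV a b : badd a (badd (bopp a) b) = b.
Proof. rewrite badd_assoc, badd_Nr, badd_0l; reflexivity. Qed.

Lemma opp_uniq x y : badd x y = bzero -> y = bopp x.
Proof. intro H. rewrite <- (addK x y), H, badd_0r. reflexivity. Qed.

Lemma opp_add a b : bopp (badd a b) = badd (bopp b) (bopp a).
Proof. symmetry; apply opp_uniq. rewrite <- badd_assoc, addKV, badd_Nr. reflexivity. Qed.

Lemma opp_opp a : bopp (bopp a) = a.
Proof. symmetry; apply opp_uniq, badd_Nl. Qed.

Lemma opp0 : bopp (@bzero B) = bzero.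
Proof. symmetry; apply opp_uniq, badd_0l. Qed.

Lemma mulK a b : bmul a (bmul (binv a) b) = b.
Proof. rewrite bmul_assoc, bmul_Vr, bmul_1l; reflexivity. Qed.

Lemma mulKV a b : bmul (binv a) (bmul a b) = b.
Proof. rewrite bmul_assoc, bmul_Vl, bmul_1l; reflexivity. Qed.

Lemma inv_uniq x y : bmul x y = bone -> y = binv x.
Proof. intro H. rewrite <- (mulKV x y), H, bmul_1r. reflexivity. Qed.

Lemma inv_mul a b : binv (bmul a b) = bmul (binv b) (binv a).
Proof. symmetry; apply inv_uniq. rewrite <- bmul_assoc, mulK, bmul_Vr. reflexivity. Qed.

Lemma inv_inv a : binv (binv a) = a.
Proof. symmetry; apply inv_uniq, bmul_Vl. Qed.

Lemma mul0 a : bmul a bzero = a.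
Proof.
  pose proof (bcompat _ a bzero bzero) as H. rewrite badd_0l in H.
  assert (E : badd (bopp a) (bmul a bzero) = bzero).
  { rewrite <- (addK (bmul a bzero) (badd (bopp a) (bmul a bzero))), <- H, badd_Nl.
    reflexivity. }
  apply opp_uniq in E. rewrite opp_opp in E. exact E.
Qed.

Lemma one0 : (@bone B) = bzero.
Proof. rewrite <- (mul0 bone), bmul_1l. reflexivity. Qed.

Lemma mul_opp a b : bmul a (bopp b) = badd a (badd (bopp (bmul a b)) a).
Proof.
  pose proof (bcompat _ a b (bopp b)) as H. rewrite badd_Nr, mul0 in H.
  transitivity
    (badd a (badd (bopp (bmul a b)) (badd (bmul a b) (badd (bopp a) (bmul a (bopp b)))))).
  - rewrite addK, addKV. reflexivity.
  - rewrite <- H. reflexivity.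
Qed.

Lemma add_as_mul (s l : B) : bmul s (lambda (binv s) l) = badd s l.
Proof.
  unfold lambda. rewrite bcompat, mul_opp, bmul_Vr, mulK, one0, opp0, badd_0l.
  repeat rewrite <- badd_assoc. rewrite addKV. reflexivity.
Qed.

Lemma mul_as_add (s l : B) : badd s (lambda s l) = bmul s l.
Proof. unfold lambda. apply addKV. Qed.

End BraceArithmetic.

Section AbelianIdealMeet.
Variable B : skew_brace.
Variables T I : B -> Prop.
Hypothesis HT : is_subbrace T.
Hypothesis HI : is_ideal I.
Hypothesis HIab : abelian_sub I.
Hypothesis HTImul : forall b : B, exists t i, T t /\ I i /\ b = bmul t i.
Hypothesis HTIadd : forall b : B, exists t i, T t /\ I i /\ b = badd t i.

Lemma ideal_mul_comm {i x : B} : I i -> I x -> bmul i x = bmul x i.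
Proof.
  intros Ii Ix. destruct (HIab i x Ii Ix) as [-> Hc]. rewrite Hc.
  symmetry; apply (HIab x i Ix Ii).
Qed.

Lemma meet_add_normal x b : bsetI I T x -> T (badd (badd b x) (bopp b)).
Proof.
  destruct HT as [[_ [TA TN]] _]. intros [Ix Tx].
  destruct (HTIadd b) as (t & i & Tt & Ii & ->).
  destruct (HIab i x Ii Ix) as [_ Hc].
  rewrite opp_add, <- (badd_assoc _ t i x), Hc.
  repeat rewrite <- badd_assoc. rewrite addKV, badd_assoc. auto.
Qed.

Lemma meet_mul_normal x b : bsetI I T x -> T (bmul (bmul b x) (binv b)).
Proof.
  destruct HT as [_ [_ [TM TV]]]. intros [Ix Tx].
  destruct (HTImul b) as (t & i & Tt & Ii & ->).
  rewrite inv_mul, <- (bmul_assoc _ t i x), (ideal_mul_comm Ii Ix).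
  repeat rewrite <- bmul_assoc. rewrite mulK, bmul_assoc. auto.
Qed.

(* λ_(t i)(x) = λ_t(λ_i(x)) = λ_t(x) for x in I. *)
Lemma meet_lambda x b : bsetI I T x -> T (lambda b x).
Proof.
  destruct HT as [[_ [TA TN]] [_ [TM _]]]. intros [Ix Tx].
  destruct (HTImul b) as (t & i & Tt & Ii & ->).
  destruct (HIab i x Ii Ix) as [Hix _].
  unfold lambda. rewrite <- bmul_assoc, Hix, bcompat, addK. auto.
Qed.

Lemma ideal_meet : is_ideal (bsetI I T).
Proof.
  destruct HT as [[T0 [TA TN]] [T1 [TM TV]]].
  destruct HI as [[I0 [IA IN]] [[I1 [IM IV]] [Inadd [Inmul Ilam]]]].
  unfold is_ideal, add_subgroup, mul_subgroup.
  split; [|split; [|split; [|split]]];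
    try (repeat split; unfold bsetI in *; intuition; fail).
  - intros x b Hx. split; [apply Inadd, Hx | apply meet_add_normal, Hx].
  - intros x b Hx. split; [apply Inmul, Hx | apply meet_mul_normal, Hx].
  - intros x b Hx. split; [apply Ilam, Hx | apply meet_lambda, Hx].
Qed.

End AbelianIdealMeet.

Arguments ideal_meet {B T I}.

Definition sumset {B : skew_brace} (S L : B -> Prop) : B -> Prop :=
  fun x => exists s l, S s /\ L l /\ x = badd s l.

Definition prodset {B : skew_brace} (S L : B -> Prop) : B -> Prop :=
  fun x => exists s l, S s /\ L l /\ x = bmul s l.

Section SubbracePlusIdeal.
Variable B : skew_brace.
Variables S L : B -> Prop.
Hypothesis HS : is_subbrace S.
Hypothesis HL : is_ideal L.

(* S + L = S L, since L is λ-invariant. *)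
Lemma sumset_prodset x : sumset S L x <-> prodset S L x.
Proof.
  destruct HL as [_ [_ [_ [_ Llam]]]].
  split; intros (s & l & Ss & Ll & ->).
  - exists s, (lambda (binv s) l). rewrite add_as_mul. auto.
  - exists s, (lambda s l). rewrite mul_as_add. auto.
Qed.

Lemma sumset_add_subgroup : add_subgroup (sumset S L).
Proof.
  destruct HS as [[S0 [SA SN]] _].
  destruct HL as [[L0 [LA LN]] [_ [Lnadd _]]].
  split; [|split].
  - exists bzero, bzero. rewrite badd_0l. auto.
  - intros x y (s1 & l1 & Ss1 & Ll1 & ->) (s2 & l2 & Ss2 & Ll2 & ->).
    exists (badd s1 s2), (badd (badd (badd (bopp s2) l1) (bopp (bopp s2))) l2).
    repeat split; auto.
    rewrite opp_opp. repeat rewrite <- badd_assoc. rewrite addKV. reflexivity.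
  - intros x (s & l & Ss & Ll & ->).
    exists (bopp s), (badd (badd s (bopp l)) (bopp s)). repeat split; auto.
    rewrite opp_add. repeat rewrite <- badd_assoc. rewrite addK. reflexivity.
Qed.

Lemma prodset_mul_subgroup : mul_subgroup (prodset S L).
Proof.
  destruct HS as [_ [S1 [SM SV]]].
  destruct HL as [_ [[L1 [LM LV]] [_ [Lnmul _]]]].
  split; [|split].
  - exists bone, bone. rewrite bmul_1l. auto.
  - intros x y (s1 & l1 & Ss1 & Ll1 & ->) (s2 & l2 & Ss2 & Ll2 & ->).
    exists (bmul s1 s2), (bmul (bmul (bmul (binv s2) l1) (binv (binv s2))) l2).
    repeat split; auto.
    rewrite inv_inv. repeat rewrite <- bmul_assoc. rewrite mulK. reflexivity.
  - intros x (s & l & Ss & Ll & ->).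
    exists (binv s), (bmul (bmul s (binv l)) (binv s)). repeat split; auto.
    rewrite inv_mul. repeat rewrite <- bmul_assoc. rewrite mulKV. reflexivity.
Qed.

Lemma sumset_subbrace : is_subbrace (sumset S L).
Proof.
  split; [apply sumset_add_subgroup|].
  destruct prodset_mul_subgroup as [P1 [PM PV]].
  split; [|split].
  - apply sumset_prodset, P1.
  - intros x y Hx Hy. apply sumset_prodset, PM; apply sumset_prodset; assumption.
  - intros x Hx. apply sumset_prodset, PV, sumset_prodset, Hx.
Qed.

Lemma subset_sumset_l : bsubset S (sumset S L).
Proof.
  destruct HL as [[L0 _] _]. intros s Ss. exists s, bzero. rewrite badd_0r. auto.
Qed.

Lemma subset_sumset_r : bsubset L (sumset S L).
Proof.
  destruct HS as [[S0 _] _]. intros l Ll. exists bzero, l. rewrite badd_0l. auto.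
Qed.

End SubbracePlusIdeal.

Arguments sumset_subbrace {B S L}.
Arguments subset_sumset_l {B S L}.
Arguments subset_sumset_r {B S L}.

Lemma modular_full {B : skew_brace} {S I L : B -> Prop} :
  add_subgroup I -> add_subgroup L -> bsubset L I -> bsubset (bsetI I S) L ->
  bsubset bsetT (sumset S L) -> bsubset I L.
Proof.
  intros [_ [IA IN]] [_ [LA _]] HLI HJL Hfull i Ii.
  destruct (Hfull i Logic.I) as (s & l & Ss & Ll & E).
  assert (Is : I s).
  { replace s with (badd i (bopp l))
      by (rewrite E, <- badd_assoc, badd_Nr, badd_0r; reflexivity).
    apply IA; [exact Ii | apply IN, HLI, Ll]. }
  rewrite E. apply LA; [apply HJL; split|]; assumption.
Qed.

Lemma modular_subbrace {B : skew_brace} {S I T : B -> Prop} :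
  add_subgroup T -> bsubset S T ->
  (forall b : B, exists s i, S s /\ I i /\ b = badd s i) ->
  bsubset T (sumset S (bsetI I T)).
Proof.
  intros [_ [TA TN]] HST HSI t Tt.
  destruct (HSI t) as (s & i & Ss & Ii & E).
  exists s, i. repeat split; auto.
  replace i with (badd (bopp s) t) by (rewrite E, addK; reflexivity).
  auto.
Qed.

Section ChiefMaximal.
Variable B : skew_brace.
Variables S I : B -> Prop.
Hypothesis HS : is_subbrace S.
Hypothesis HI : is_ideal I.
Hypothesis HIab : abelian_sub I.
Hypothesis HSImul : forall b : B, exists s i, S s /\ I i /\ b = bmul s i.
Hypothesis HSIadd : forall b : B, exists s i, S s /\ I i /\ b = badd s i.

Lemma full_of_contains_ideal {X : B -> Prop} :
  add_subgroup X -> bsubset S X -> bsubset I X -> bsubset bsetT X.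
Proof.
  intros [_ [XA _]] HSX HIX b _.
  destruct (HSIadd b) as (s & i & Ss & Ii & ->). auto.
Qed.

Lemma maximal_chief : is_maximal_subbrace S -> chief_factor I (bsetI I S).
Proof.
  intros [_ [HnS Hmax]].
  split; [exact HI|split; [exact (ideal_meet HS HI HIab HSImul HSIadd)|split]].
  { intros x [Ix _]; exact Ix. }
  split.
  - intro HIJ. apply HnS, full_of_contains_ideal; [apply HS | intros x Sx; exact Sx |].
    intros i Ii. apply HIJ, Ii.
  - intros L HL HJL HLI.
    destruct (classic (bsubset bsetT (sumset S L))) as [Hfull|Hproper].
    + right. destruct HI as [HIadd _]. destruct HL as [HLadd _].
      exact (modular_full HIadd HLadd HLI HJL Hfull).
    + left. intros l Ll. split; [apply HLI, Ll|].
      apply (Hmax _ (sumset_subbrace HS HL) (subset_sumset_l HL) Hproper).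
      apply (subset_sumset_r HS), Ll.
Qed.

Lemma chief_maximal : chief_factor I (bsetI I S) -> is_maximal_subbrace S.
Proof.
  intros [_ [_ [_ [HnIJ Hch]]]].
  split; [exact HS|split].
  - intro Hfull. apply HnIJ. intros i Ii. split; [exact Ii | apply Hfull; exact Logic.I].
  - intros T HT HST HnT.
    assert (HTI : is_ideal (bsetI I T)).
    { apply ideal_meet; auto.
      - intro b. destruct (HSImul b) as (s & i & Hs & Hi & E). exists s, i. auto.
      - intro b. destruct (HSIadd b) as (s & i & Hs & Hi & E). exists s, i. auto. }
    destruct (Hch _ HTI) as [HIT_J|HI_IT].
    + intros x [Ix Sx]. split; auto.
    + intros x [Ix _]; exact Ix.
    + destruct HS as [[_ [SA _]] _].
      intros t Tt.
      destruct (modular_subbrace (proj1 HT) HST HSIadd t Tt) as (s & i & Ss & Hi & ->).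
      apply SA; [exact Ss | apply HIT_J, Hi].
    + exfalso. apply HnT, full_of_contains_ideal; [apply HT | exact HST |].
      intros i Ii. apply HI_IT, Ii.
Qed.

End ChiefMaximal.

Theorem lemma4p10 (B : skew_brace) (S I : B -> Prop) :
  is_subbrace S -> is_ideal I -> abelian_sub I ->
  (forall b : B, exists s i, S s /\ I i /\ b = bmul s i) ->
  (forall b : B, exists s i, S s /\ I i /\ b = badd s i) ->
  is_ideal (bsetI I S) /\
  (is_maximal_subbrace S <-> chief_factor I (bsetI I S)).
Proof.
  intros HS HI HIab HSImul HSIadd.
  split; [exact (ideal_meet HS HI HIab HSImul HSIadd)|].
  split; [apply maximal_chief | apply chief_maximal]; assumption.
Qed.
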